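(* Let $(\rho_n)_{n\ge1}$ with $\rho_n$ a probability measure on $\mathbb{Y}_n$. Then $(\rho_n)$ is LLN-appropriate if and only if there exist reals $(c_k)_{k\ge1}$ such that (1) for every cycle $\sigma\in S_\infty$ of length $k$, $\lim_n n^{|\sigma|/2}M_{\rho_n}(\sigma)=c_k$; and (2) for every $r\ge2$ and cycles $\sigma_1,\dots,\sigma_r\in S_\infty$ with pairwise disjoint supports, $\lim_n n^{(|\sigma_1|+\dots+|\sigma_r|)/2}\kappa_{\rho_n,r}(\sigma_1,\dots,\sigma_r)=0$.
   Context: $\mathbb{Y}_n$: partitions of $n$; $S_\infty=\bigcup_mS_m$; $|\sigma|$ is the minimal number of transpositions whose product is $\sigma$ (so a $k$-cycle has $|\sigma|=k-1$). $M_\rho(\sigma)=\sum_{\lambda\in\mathbb{Y}_n}\rho(\lambda)\chi_\lambda(\tau)/\dim\lambda$ if $\sigma$ is conjugate to some $\tau\in S_n$, else $0$ ($\chi_\lambda$ irreducible characters, $\dim\lambda=\chi_\lambda(e)$). Permutation-cumulant of permutations with disjoint supports: $\kappa_{\rho,r}(\sigma_1,\dots,\sigma_r)=\sum_{\pi}(-1)^{|\pi|-1}(|\pi|-1)!\prod_{B\in\pi}M_\rho(\prod_{j\in B}\sigma_j)$, over set partitions $\pi$ of $\{1,\dots,r\}$. Young generating function $A_\rho=\sum_{\vec i}M_\rho(\sigma_{\vec i})\prod_{k\ge1}n^{i_k(k-1)/2}x_k^{i_k}/i_k!$ over finitely supported $\vec i\in\mathbb{Z}_{\ge0}^{\mathbb{N}}$,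 $\sigma_{\vec i}$ any permutation with $i_k$ cycles of length $k$ for each $k\ge2$. $(\rho_n)$ is LLN-appropriate if for some reals $c_i$, $\lim_n\partial_i\ln A_{\rho_n}|_{\vec x=0}=c_i$ for all $i$ and all formal mixed derivatives of order $\ge2$ of $\ln A_{\rho_n}$ at $\vec x=0$ tend to $0$. *)

From mathcomp Require Import all_boot all_order all_algebra all_fingroup.
From mathcomp Require Import all_field all_character.
From mathcomp Require Import mpoly.
From mathcomp Require Import all_classical all_reals all_analysis.

Set Implicit Arguments.
Unset Strict Implicit.
Unset Printing Implicit Defensive.

Import Order.TTheory GRing.Theory Num.Theory.
Import numFieldNormedType.Exports.
Local Open Scope classical_set_scope.
Local Open Scope ring_scope.

(* Elements of S_infinity are represented as permutations s : 'S_m of some  *)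
(* finite 'I_m (S_m viewed inside S_infinity by fixing all points >= m).    *)

Definition ctype m (s : 'S_m) (k : nat) : nat :=
  #|[set X in porbits s | #|X| == k]|.

Definition ctseq m (s : 'S_m) : seq nat := [seq ctype s k | k <- iota 0 m.+1].

(* two cycle-type lists agree on all cycle lengths k >= 2
   (missing entries are 0); for permutations this is exactly
   conjugacy in S_infinity *)
Definition same_ct (s t : seq nat) : bool :=
  [forall k : 'I_(maxn (size s) (size t)),
     (1 < k)%N ==> (nth 0%N s k == nth 0%N t k)].

(* |s| = minimal number of transpositions = m - (number of cycles) *)
Definition perm_length m (s : 'S_m) : nat := (m - #|porbits s|)%N.

Definition psupp m (s : 'S_m) : {set 'I_m} := [set x | s x != x].

(* s is a cycle of length k (k = 1: the identity) *)
Definition is_cycle_of_length m (s : 'S_m) (k : nat) : Prop :=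
  forall j : nat, (1 < j)%N -> ctype s j = (j == k : nat).

(* irreducible characters of S_n (Iirr [set: 'S_n]); character values of S_n *)
(* are integers, which are transported to R via the floor.                  *)

Definition chiR {R : realType} n (i : Iirr [set: 'S_n]%G) (t : 'S_n) : R :=
  (Num.floor ('chi[ [set: 'S_n]%G ]_i t))%:~R.

Definition prob_on (R : realType) n (rho : Iirr [set: 'S_n]%G -> R) : Prop :=
  (forall i, 0 <= rho i) /\ \sum_i rho i = 1.

(* M_rho evaluated at the conjugacy class (in S_infinity) with cycle-type
   list ct; 0 if no element of S_n has that cycle type *)
Definition Mct (R : realType) n (rho : Iirr [set: 'S_n]%G -> R) (ct : seq nat)
  : R :=
  if [pick t : 'S_n | same_ct ct (ctseq t)] is Some t then
    \sum_i rho i * (chiR i t / chiR i 1)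
  else 0.

Definition Mrho (R : realType) n (rho : Iirr [set: 'S_n]%G -> R) m (s : 'S_m)
  : R := Mct rho (ctseq s).

Definition kappa (R : realType) n (rho : Iirr [set: 'S_n]%G -> R) r m
  (s : 'I_r -> 'S_m) : R :=
  \sum_(P : {set {set 'I_r}} | finset.partition P [set: 'I_r])
     ((-1) ^+ (#|P|.-1) * (#|P|.-1)`!%:R *
      \prod_(B in P) Mrho rho (\prod_(j in B) s j)%g).

(* Variable i : 'I_K of an mpoly in K variables stands for x_(i+1).         *)
(* For a multi-index a (on x_1..x_K) of total degree D, the formal          *)
(* derivative d^a ln A at 0 only involves the part of A of degree <= D in    *)
(* x_1..x_K, and ln A = sum_{j>=1} (-1)^(j-1) (A-1)^j / j where only j <= D *)
(* contributes (A(0) = M(e) = 1); we compute it from these truncations.     *)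

(* cycle-type list of sigma_m: m_(k-1) cycles of length k, for 1 <= k <= K *)
Definition ct_of_mnm K (a : mpoly.multinom K) : seq nat :=
  0%N :: tval (mpoly.multinom_val a).

(* part of degree <= D in x_1..x_K of A_rho (rho on Y_n) *)
Definition Atrunc (R : realType) n (rho : Iirr [set: 'S_n]%G -> R) K D
  : mpoly.mpoly K R :=
  \sum_(a : mpoly.bmultinom K D.+1)
     ((Mct rho (ct_of_mnm (mpoly.bmnm a)) *
       \prod_(i < K) (Num.sqrt (n%:R : R) ^+ (mpoly.bmnm a i * i)
                      / (mpoly.bmnm a i)`!%:R))
      *: mpoly.mpolyX R (mpoly.bmnm a)).

Definition logtrunc (R : realType) K D (p : mpoly.mpoly K R) : mpoly.mpoly K R :=
  \sum_(1 <= j < D.+1) (((-1) ^+ j.-1 / j%:R) *: (p - 1) ^+ j).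

Definition dlogA (R : realType) n (rho : Iirr [set: 'S_n]%G -> R) K
  (a : mpoly.multinom K) : R :=
  mpoly.meval (fun _ => 0)
    (mpoly.mderivm a (logtrunc (mpoly.mdeg a) (Atrunc rho K (mpoly.mdeg a)))).

Definition LLN_appropriate (R : realType)
  (rho : forall n : nat, Iirr [set: 'S_n]%G -> R) : Prop :=
  (exists c : nat -> R, forall k : nat,
      (fun n => dlogA (rho n) (mpoly.mnm1 (@ord_max k))) @ \oo --> (c k.+1 : R))
  /\ (forall (K : nat) (a : mpoly.multinom K), (2 <= mpoly.mdeg a)%N ->
      (fun n => dlogA (rho n) a) @ \oo --> (0 : R)).

Definition disjoint_supp m (s t : 'S_m) : bool :=
  fintype.disjoint (mem (psupp s)) (mem (psupp t)).

(* Colour each cycle of a family sigma_1, ..., sigma_r of disjoint cycles by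
   its length; the colour counts form a multi-index a. Expanding
   ln A = sum_j (-1)^(j-1) (A - 1)^j / j and differentiating along a with the
   Leibniz rule turns d^a ln A (0) into a sum over the set partitions pi of
   the cycles, with weights (-1)^(|pi|-1) (|pi|-1)!, in which a block B of
   cycles contributes d^(a_B) A (0) = n^(|sigma_B|/2) M_rho(sigma_B), sigma_B
   being the product of the cycles of B: cycle types add under products of
   permutations with disjoint supports. Hence
     d^a ln A_rho (0)
       = n^((|sigma_1| + ... + |sigma_r|)/2) kappa_rho(sigma_1, ..., sigma_r)
   exactly, first derivatives being the case r = 1. Every multi-index arises
   from some family of disjoint cycles, so the two sides of the equivalence
   are conditions on the same numbers. *)

From mathcomp Require Import all_boot all_order all_algebra all_fingroup.
From mathcomp Require Import all_field all_character.
From mathcomp Require Import mpoly.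
From mathcomp Require Import all_classical all_reals all_analysis.
From mathcomp Require Import zify.
Import Order.TTheory GRing.Theory Num.Theory.
Import numFieldNormedType.Exports.
From mathcomp Require Import fintype finset.

Set Implicit Arguments.
Unset Strict Implicit.
Unset Printing Implicit Defensive.

Local Open Scope ring_scope.

Lemma setUD_sub (T : finType) (A B : {set T}) : A \subset B -> A :|: (B :\: A) = B.
Proof.
move=> AB; apply/setP => x; rewrite !inE.
by case: (boolP (x \in A)) => //= /(subsetP AB).
Qed.

Lemma partition_setD_notin (T : finType) (P : {set {set T}}) (S B : {set T}) :
  partition P (S :\: B) -> B != set0 -> B \notin P.
Proof.
move=> hP; apply: contraNN => BP; rewrite -subset0; apply/subsetP => x xB.
by have := subsetP (partitionS hP BP) x xB; rewrite inE xB.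
Qed.

Lemma big_partition_block (R : Type) (idx : R) (op : Monoid.com_law idx)
    (T : finType) (S B : {set T}) (F : {set {set T}} -> R) :
  B \subset S -> B != set0 ->
  \big[op/idx]_(P | partition P S && (B \in P)) F P =
  \big[op/idx]_(P | partition P (S :\: B)) F (B |: P).
Proof.
move=> BS B0; rewrite (reindex_onto (fun P => B |: P) (fun P => P :\ B)) /=; last first.
  by move=> P /andP[_ BP]; rewrite setD1K.
apply: eq_bigl => P; apply/idP/idP => [/andP[/andP[hP _] /eqP <-]|hP].
  by apply: partitionD1 hP _; rewrite setU11.
rewrite setU11 setU1K ?(partition_setD_notin hP) // eqxx !andbT.
rewrite -[S in partition _ S](setUD_sub BS); apply: partitionU1 => //.
by rewrite disjoints_subset; apply/subsetP => x xB; rewrite !inE xB.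
Qed.

Lemma card_setD_lt (T : finType) (S B : {set T}) :
  B \subset S -> B != set0 -> (#|S :\: B| < #|S|)%N.
Proof.
move=> BS B0; rewrite cardsD (setIidPr BS).
have : (0 < #|B|)%N by rewrite card_gt0.
have : (#|B| <= #|S|)%N by apply: subset_leq_card.
lia.
Qed.

Section OrderedPartitions.

Variables (R : numFieldType) (T : finType) (G : {set T} -> R).

(* [O j S] is the sum of [G B_1 * ... * G B_j] over the ordered j-tuples of
   nonempty disjoint blocks covering [S]. *)
Variable O : nat -> {set T} -> R.
Hypothesis O0 : forall S, O 0 S = (S == set0)%:R.
Hypothesis OS : forall j S,
  O j.+1 S = \sum_(B : {set T} | (B \subset S) && (B != set0)) G B * O j (S :\: B).

Lemma ordered_partitions_eq0 j (S : {set T}) : (#|S| < j)%N -> O j S = 0.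
Proof.
elim: j S => [//|j IH] S hS; rewrite OS big1 // => B /andP[BS B0].
by rewrite IH ?mulr0 //; have := card_setD_lt BS B0; lia.
Qed.

Lemma sum_partitions_by_block (h : nat -> R) (S : {set T}) :
  (S != set0) ->
  \sum_(P | partition P S) h #|P| * \prod_(B in P) G B =
  \sum_(P | partition P S) \sum_(B in P)
     h #|P| / #|P|%:R * (G B * \prod_(B' in P | B' != B) G B').
Proof.
move=> S0; apply: eq_bigr => P hP.
have P0 : #|P|%:R != 0 :> R.
  rewrite pnatr_eq0 -lt0n card_gt0; apply: contraNneq S0 => P0.
  by rewrite -(cover_partition hP) P0 /cover big_set0.
under [RHS]eq_bigr => B BP do rewrite -(bigD1 B) //=.
by rewrite sumr_const -[_ *+ #|P|]mulr_natr mulrAC divfK.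
Qed.

Theorem sum_partitionsE (h : nat -> R) (S : {set T}) :
  \sum_(P | partition P S) h #|P| * \prod_(B in P) G B =
  \sum_(j < #|T|.+1) h j / j`!%:R * O j S.
Proof.
have [N] := ubnP #|S|; elim: N => // N IH in S h *; rewrite ltnS => SN.
have [->|S0] := eqVneq S set0.
  rewrite (big_pred1 set0); last by move=> P; rewrite partition_set0.
  rewrite big_set0 cards0 big_ord_recl O0 eqxx fact0 divr1 !mulr1 big1 ?addr0 // => j _.
  by rewrite ordered_partitions_eq0 ?mulr0 ?cards0.
rewrite sum_partitions_by_block // (exchange_big_dep
  (fun B : {set T} => (B \subset S) && (B != set0))) /=; last first.
  by move=> P B hP BP; rewrite (partitionS hP BP) (partition_neq0 hP BP).
transitivity (\sum_(B : {set T} | (B \subset S) && (B != set0)) \sum_(j < #|T|.+1)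
   G B * (h j.+1 / j.+1%:R / j`!%:R * O j (S :\: B))).
  apply: eq_bigr => B /andP[BS B0].
  rewrite -mulr_sumr -(IH _ (fun j => h j.+1 / j.+1%:R)); last first.
    by have := card_setD_lt BS B0; lia.
  rewrite mulr_sumr (big_partition_block _ _ BS B0).
  apply: eq_bigr => P hP; have BP := partition_setD_notin hP B0.
  rewrite cardsU1 BP add1n mulrCA; congr (_ * (_ * _)).
  apply: eq_bigl => B'; rewrite in_setU1.
  by case: (eqVneq B' B) => [->|] /=; rewrite ?(negbTE BP) ?andbT.
rewrite exchange_big big_ord_recr /= [X in _ + X]big1 /= => [|B /andP[BS B0]]; last first.
  rewrite ordered_partitions_eq0 ?mulr0 //.
  exact: leq_trans (card_setD_lt BS B0) (max_card _).
rewrite addr0 [RHS]big_ord_recl O0 (negbTE S0) mulr0 add0r.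
apply: eq_bigr => j _; rewrite OS mulr_sumr; apply: eq_bigr => B _.
by rewrite mulrCA lift0 factS natrM invfM !mulrA.
Qed.

End OrderedPartitions.

Lemma partition_ord1 (P : {set {set 'I_1}}) : partition P setT = (P == [set setT]).
Proof.
have T0 : ([set: 'I_1] == set0) = false by apply/negbTE/set0Pn; exists ord0; rewrite inE.
apply/idP/eqP => [hP|->]; last by rewrite /partition cover1 trivIset1 inE eq_sym T0 eqxx.
have BT B : B \in P -> B = setT.
  move=> BP; have /set0Pn[y yB] := partition_neq0 hP BP.
  by apply/setP => x; rewrite inE (ord1 x) -(ord1 y).
have /set0Pn[B0 B0P] : P != set0.
  by apply: contraFN T0 => /eqP P0; rewrite -(cover_partition hP) P0 /cover big_set0.
apply/setP => B; rewrite inE; apply/idP/eqP => [/BT //|->].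
by rewrite -(BT _ B0P).
Qed.

Lemma big_subsetU1 (R : Type) (idx : R) (op : Monoid.com_law idx)
    (T : finType) (S : {set T}) z (F : {set T} -> R) : z \notin S ->
  \big[op/idx]_(B : {set T} | B \subset z |: S) F B =
  op (\big[op/idx]_(B : {set T} | B \subset S) F (z |: B))
     (\big[op/idx]_(B : {set T} | B \subset S) F B).
Proof.
move=> zS; have notin_sub (B : {set T}) : B \subset S -> z \notin B.
  by move=> BS; apply: contra zS; apply: (subsetP BS).
rewrite (bigID (fun B : {set T} => z \in B)) /=; congr (op _ _).
  rewrite (reindex_onto (fun B => z |: B) (fun B => B :\ z)) /= => [|B /andP[_ zB]];
    last by rewrite setD1K.
  apply: eq_bigl => B; rewrite setU11 andbT.
  apply/andP/idP => [[zBS /eqP <-]|BS]; last first.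
    by rewrite setUS // setU1K ?notin_sub.
  apply/subsetP => x; rewrite !inE => /andP[xz xB].
  by have := subsetP zBS x; rewrite !inE xB (negbTE xz) => /(_ isT).
apply: eq_bigl => B; apply/andP/idP => [[/subsetP BzS zB]|BS]; last first.
  by rewrite notin_sub // (subset_trans BS) ?subsetU1.
apply/subsetP => x xB; have := BzS x xB; rewrite !inE.
by case: (eqVneq x z) => [xz|//]; move: zB; rewrite -xz xB.
Qed.

Section ColourCounts.

Variables (T : finType) (K : nat) (c : T -> 'I_K).
Implicit Types (S B : {set T}) (z : T).

(* Differentiating along [mcount S] differentiates once per element of [S]
   (in its colour), so that the Leibniz rule becomes a plain sum over the
   subsets of [S], without binomial coefficients. *)
Definition mcount (S : {set T}) : 'X_{1..K} :=
  [multinom #|[set j in S | c j == i]| | i < K].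

Lemma mcountE S i : mcount S i = #|[set j in S | c j == i]|.
Proof. by rewrite mnmE. Qed.

Lemma mcount0 : mcount set0 = 0%MM.
Proof.
apply/mnmP => i; rewrite mcountE mnm0E; apply/eqP; rewrite cards_eq0.
by apply/eqP/setP => j; rewrite !inE.
Qed.

Lemma mcountU1 S z : z \notin S -> mcount (z |: S) = (mcount S + U_(c z))%MM.
Proof.
move=> zS; apply/mnmP => i; rewrite mnmDE mnm1E !mcountE.
have [czi|czi] := eqVneq (c z) i; last first.
  by rewrite addn0; apply: eq_card => j; rewrite !inE;
     case: (eqVneq j z) => [->|]; rewrite ?(negbTE czi) ?andbF.
transitivity #|z |: [set j in S | c j == i]|.
  by apply: eq_card => j; rewrite !inE; case: (eqVneq j z) => [->|] //=; rewrite czi eqxx.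
by rewrite cardsU1 inE (negbTE zS) addnC.
Qed.

Lemma mdeg_mcount S : mdeg (mcount S) = #|S|.
Proof.
rewrite mdegE (eq_bigr (fun i => \sum_(j in S | c j == i) 1)%N) => [|i _].
  by rewrite -(partition_big c xpredT) //= sum1_card.
by rewrite mcountE -sum1_card; apply: eq_bigl => j; rewrite inE.
Qed.

Lemma mcount_eq0 S : (mcount S == 0%MM) = (S == set0).
Proof. by rewrite -mdeg_eq0 mdeg_mcount cards_eq0. Qed.

Lemma mderivm_mcountM (R : ringType) (p q : {mpoly R[K]}) (S : {set T}) :
  (p * q)^`M[mcount S] =
  \sum_(B : {set T} | B \subset S) p^`M[mcount B] * q^`M[mcount (S :\: B)].
Proof.
have [N] := ubnP #|S|; elim: N => // N IH in S *; rewrite ltnS => SN.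
have [->|[z zS]] := set_0Vmem S.
  rewrite (big_pred1 set0) => [|B]; last by rewrite subset0.
  by rewrite setD0 mcount0 !mderivm0m.
have zS' : z \notin S :\ z by rewrite setD11.
rewrite -(setD1K zS) mcountU1 // mderivmDm IH; last by rewrite (cardsD1 z S) zS in SN.
rewrite mderivmU1m raddf_sum big_subsetU1 // -big_split; apply: eq_bigr => B BS /=.
have zB : z \notin B by apply: contra zS'; apply: (subsetP BS).
rewrite mderivM -!mderivmU1m -!mderivmDm -!mcountU1 //; last first.
  by rewrite inE (negbTE zS') andbF.
congr (_ * _ + _ * _); do 2 f_equal; apply/setP => x; rewrite !inE;
  by case: (eqVneq x z) => [->|]; rewrite ?eqxx ?(negbTE zB) ?andbF.
Qed.

End ColourCounts.

Lemma exists_mcount K (a : 'X_{1..K}) : exists c : 'I_(mdeg a) -> 'I_K, mcount c setT = a.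
Proof.
case: K a => [|K] a.
  have a0 : mdeg a = 0%N by rewrite mdegE big_ord0.
  by exists (cast_ord a0); apply/mnmP => -[].
pose cols := flatten [seq nseq (a i) i | i <- enum 'I_K.+1].
have size_cols : size cols = mdeg a.
  rewrite size_flatten /shape -map_comp mdegE sumnE big_map big_enum /=.
  by apply: eq_bigr => i _; rewrite /= size_nseq.
exists (fun j => nth ord0 cols j); apply/mnmP => i; rewrite mcountE -sum1_card.
rewrite (eq_bigl (fun j : 'I_(mdeg a) => nth ord0 cols j == i)) => [|j]; last first.
  by rewrite !inE.
rewrite -(big_mkord (fun j => nth ord0 cols j == i) (fun _ => 1%N)) -size_cols.
rewrite -(big_nth ord0 (fun x => x == i) (fun _ => 1%N)) sum1_count.
rewrite count_flatten -map_comp sumnE big_map big_enum /= (bigD1 i) //=.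
rewrite count_nseq /= eqxx.
by rewrite mul1n big1 ?addn0 // => i' i'i; rewrite count_nseq /= (negbTE i'i).
Qed.

Lemma meval0E (R : comRingType) K (q : {mpoly R[K]}) : meval (fun _ => 0) q = q@_0.
Proof.
rewrite mevalE [in RHS](mpolyE q) raddf_sum /=; apply: eq_bigr => m _.
rewrite mcoeffZ mcoeffX; congr (_ * _).
have [->|m0] := eqVneq m 0%MM; first by rewrite big1 // => i _; rewrite mnm0E expr0.
have [i mi] : exists i, m i != 0%N.
  apply/existsP; apply: contraR m0; rewrite negb_exists => /forallP H.
  by apply/eqP/mnmP => i; rewrite mnm0E; apply/eqP; move: (H i); rewrite negbK.
by rewrite (bigD1 i) //= expr0n (negbTE mi) mul0r.
Qed.

Lemma meval0_mderivm (R : comRingType) K (m : 'X_{1..K}) (q : {mpoly R[K]}) :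
  meval (fun _ => 0) q^`M[m] = (\prod_(i < K) (m i)`!)%:R * q@_m.
Proof.
rewrite meval0E mcoeff_mderivm addm0 mulr_natl.
by under eq_bigr do rewrite ffactnn.
Qed.

Section PermOrbits.

Variable T : finType.
Implicit Types (u v : {perm T}) (x y : T).

Lemma porbit_fix u x : u x = x -> porbit u x = [set x].
Proof.
move=> ux; apply/setP => y; rewrite inE; apply/porbitP/eqP => [[i ->]|->].
  by rewrite permX; elim: i => //= i ->.
by exists 0%N; rewrite expg0 perm1.
Qed.

Lemma card_porbit1 u x : (#|porbit u x| == 1%N) = (u x == x).
Proof.
apply/idP/eqP => [/cards1P [y hy]|/porbit_fix ->]; last by rewrite cards1.
have := porbit_id u x; have := mem_porbit u 1 x.
by rewrite expg1 hy !inE => /eqP -> /eqP.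
Qed.

Lemma porbits_memE u X x : X \in porbits u -> x \in X -> X = porbit u x.
Proof. by move=> /imsetP[y _ ->] xy; apply/esym/eqP; rewrite eq_porbit_mem. Qed.

Lemma partition_porbits u : partition (porbits u) [set: T].
Proof.
apply/and3P; split.
- apply/eqP/setP => x; rewrite inE; apply/bigcupP; exists (porbit u x).
    exact: imset_f.
  exact: porbit_id.
- apply/trivIsetP => X Y XP YP; apply: contraNT; rewrite -setI_eq0 => /set0Pn[z].
  by rewrite inE => /andP[zX zY]; rewrite (porbits_memE XP zX) (porbits_memE YP zY) eqxx.
- apply/imsetP => -[x _ /esym/eqP]; rewrite -cards_eq0.
  by rewrite (negbTE (card_porbit_neq0 _ _)).
Qed.

Lemma eq_porbit_on u v (A : {set T}) x :
    (forall y, y \in A -> u y = v y /\ v y \in A) -> x \in A ->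
  porbit u x = porbit v x.
Proof.
move=> uvA xA; have iterA i : iter i u x = iter i v x /\ iter i v x \in A.
  by elim: i => [|i [IHi ?]] //=; rewrite IHi; apply: uvA.
by apply/setP => y; apply/porbitP/porbitP => -[i ->]; exists i;
  rewrite !permX; case: (iterA i).
Qed.

End PermOrbits.

Section CycleType.

Variable m : nat.
Implicit Types (s t u : 'S_m) (x y : 'I_m).

Lemma in_psupp u x : (x \in psupp u) = (u x != x).
Proof. by rewrite inE. Qed.

Lemma perm_psupp u x : x \in psupp u -> u x \in psupp u.
Proof. by rewrite !in_psupp; apply: contra => /eqP /perm_inj ->. Qed.

Lemma psupp1 : psupp (1%g : 'S_m) = set0.
Proof. by apply/setP => x; rewrite !inE perm1 eqxx. Qed.

Lemma psuppM s t : psupp (s * t)%g \subset psupp s :|: psupp t.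
Proof.
apply/subsetP => x; rewrite !inE permM; apply: contraR.
by rewrite negb_or !negbK => /andP[/eqP -> /eqP ->].
Qed.

Lemma disjoint_supp_fix s t x : disjoint_supp s t -> x \in psupp s -> t x = x.
Proof.
by move=> st xs; apply/eqP; apply: contraFT (disjointFr st xs); rewrite in_psupp.
Qed.

Lemma porbits_nontrivial u X : X \in porbits u -> #|X| != 1%N ->
  exists2 x, x \in psupp u & X = porbit u x.
Proof. by move=> /imsetP[x _ ->]; exists x; rewrite // in_psupp -card_porbit1. Qed.

Lemma ctype_gt u k : (m < k)%N -> ctype u k = 0%N.
Proof.
move=> mk; apply/eqP; rewrite cards_eq0; apply/eqP/setP => X; rewrite !inE.
by apply/negbTE/negP => /andP[_ /eqP Xk]; have := max_card X; rewrite card_ord Xk; lia.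
Qed.

Lemma ctype1 k : (1 < k)%N -> ctype (1%g : 'S_m) k = 0%N.
Proof.
move=> k1; apply/eqP; rewrite cards_eq0; apply/eqP/setP => X; rewrite !inE.
apply/negbTE/negP => /andP[/imsetP[x _ ->] /eqP xk].
by move: (card_porbit1 1%g x); rewrite perm1 eqxx xk; case: k k1 {xk} => [|[|]].
Qed.

Lemma ctype_trivial u : (forall k, (1 < k)%N -> ctype u k = 0%N) -> u = 1%g.
Proof.
move=> u1; apply/permP => x; rewrite perm1; apply/eqP/negPn/negP => ux.
have x1 : #|porbit u x| != 1%N by rewrite card_porbit1.
have /eqP : ctype u #|porbit u x| = 0%N.
  by apply: u1; rewrite ltn_neqAle eq_sym x1 lt0n card_porbit_neq0.
by rewrite cards_eq0 => /eqP/setP/(_ (porbit u x)); rewrite !inE imset_f // eqxx.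
Qed.

Lemma perm_lengthE u : perm_length u = (\sum_(j < m.+1) j.-1 * ctype u j)%N.
Proof.
have orbit_gt0 X : X \in porbits u -> (0 < #|X|)%N.
  by move=> /imsetP[x _ ->]; rewrite lt0n card_porbit_neq0.
have -> : perm_length u = (\sum_(X in porbits u) #|X|.-1)%N.
  rewrite /perm_length -{1}(card_ord m) -cardsT (card_partition (partition_porbits u)).
  rewrite -sum1_card -(eq_bigr _ (fun X XP => prednK (orbit_gt0 X XP))).
  by under eq_bigr do rewrite -addn1; rewrite big_split addnK.
have card_lt (X : {set 'I_m}) : (#|X| < m.+1)%N.
  by rewrite ltnS -[m in (_ <= m)%N]card_ord max_card.
rewrite (partition_big (fun X : {set 'I_m} => (inord #|X| : 'I_m.+1)) xpredT) //=.
apply: eq_bigr => j _; rewrite /ctype -sum1_card big_distrr /= muln1.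
apply: eq_big => [X|X /andP[_ /eqP <-]]; last by rewrite inordK.
rewrite !inE; congr (_ && _); apply/eqP/eqP => [<-|->]; first by rewrite inordK.
by apply: val_inj; rewrite /= inordK.
Qed.

Lemma cycle_length_leq u k : is_cycle_of_length u k -> (1 < k)%N -> (k <= m)%N.
Proof.
move=> uk k1; rewrite leqNgt; apply/negP => mk.
by move: (uk k k1); rewrite ctype_gt // eqxx.
Qed.

Lemma cycle_length_pred_leq u k : is_cycle_of_length u k -> (k.-1 <= m)%N.
Proof.
move=> uk; case: (ltnP 1 k) => [k1|]; last by case: k {uk} => [|[|]].
exact: leq_trans (leq_pred k) (cycle_length_leq uk k1).
Qed.

Lemma perm_length_cycle u k : is_cycle_of_length u k -> (0 < k)%N ->
  perm_length u = k.-1.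
Proof.
move=> uk k0; rewrite perm_lengthE.
rewrite (eq_bigr (fun j : 'I_m.+1 => if nat_of_ord j == k then k.-1 else 0%N))
  => [|j _]; last first.
  case: (ltnP 1 j) => j1.
    by rewrite uk //; case: eqP => [->|]; rewrite ?muln1 ?muln0.
  have j0 : (nat_of_ord j).-1 = 0%N by case: (nat_of_ord j) j1 => [|[|]].
  by rewrite j0 mul0n; case: eqP => // <-.
case: (ltnP 1 k) => k1; last first.
  by rewrite big1 => [|j _]; case: k k0 k1 {uk} => [|[|]] //; case: eqP.
rewrite (bigD1 (Ordinal (cycle_length_leq uk k1 : k < m.+1)%N)) //= eqxx.
rewrite big1 ?addn0 // => j.
by rewrite -val_eqE /= => /negbTE ->.
Qed.

Section DisjointProduct.

Variables s t : 'S_m.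
Hypothesis st : disjoint_supp s t.

Lemma porbitM_disjointl x : x \in psupp s -> porbit (s * t)%g x = porbit s x.
Proof.
apply: eq_porbit_on => y ys; split; last exact: perm_psupp.
by rewrite permM (disjoint_supp_fix st (perm_psupp ys)).
Qed.

Lemma porbitM_disjointr x : x \in psupp t -> porbit (s * t)%g x = porbit t x.
Proof.
have ts : disjoint_supp t s by rewrite /disjoint_supp disjoint_sym.
apply: eq_porbit_on => y yt; split; last exact: perm_psupp.
by rewrite permM (disjoint_supp_fix ts yt).
Qed.

Lemma ctypeM k : (1 < k)%N -> ctype (s * t)%g k = (ctype s k + ctype t k)%N.
Proof.
move=> k1; rewrite /ctype -cardsUI.
have nontriv (X : {set 'I_m}) : #|X| == k -> #|X| != 1%N.
  by move/eqP->; case: k k1 => [|[|]].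
set A := [set X in porbits s | _]; set B := [set X in porbits t | _].
have -> : A :&: B = set0.
  apply/setP => X; rewrite !inE; apply/negbTE/negP => /andP[/andP[Xs Xk] /andP[Xt _]].
  have [x xs eX] := porbits_nontrivial Xs (nontriv X Xk).
  have := nontriv X Xk; rewrite (porbits_memE Xt (_ : x \in X)) ?eX ?porbit_id //.
  by rewrite card_porbit1 (disjoint_supp_fix st xs) eqxx.
rewrite cards0 addn0.
apply: eq_card => X; rewrite !inE.
case: (boolP (#|X| == k)) => Xk; rewrite ?andbF // !andbT.
apply/idP/orP => [/porbits_nontrivial /(_ (nontriv X Xk)) [x xst ->]|].
  have : (x \in psupp s) || (x \in psupp t) by rewrite -in_setU (subsetP (psuppM s t)).
  case/orP => [xs|xt]; [left; rewrite porbitM_disjointl | right; rewrite porbitM_disjointr];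
    by rewrite ?imset_f.
by case=> /porbits_nontrivial /(_ (nontriv X Xk)) [x xs ->];
  [rewrite -porbitM_disjointl | rewrite -porbitM_disjointr]; rewrite ?imset_f.
Qed.

End DisjointProduct.

Section DisjointFamily.

Variables (I : finType) (s : I -> 'S_m).
Hypothesis disjoint_s : forall i j, i != j -> disjoint_supp (s i) (s j).

Lemma psupp_prod (l : seq I) (P : pred I) x :
  x \in psupp (\prod_(j <- l | P j) s j)%g -> exists2 j, j \in l & x \in psupp (s j).
Proof.
elim: l => [|a l IHl]; first by rewrite big_nil psupp1 inE.
rewrite big_cons; case: (P a) => [/(subsetP (psuppM _ _))|]; last first.
  by case/IHl => j jl xj; exists j; rewrite // inE jl orbT.
rewrite inE => /orP[xa|/IHl[j jl xj]]; first by exists a; rewrite ?mem_head.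
by exists j; rewrite // inE jl orbT.
Qed.

Lemma ctype_prod_seq k (l : seq I) (P : pred I) : (1 < k)%N -> uniq l ->
  ctype (\prod_(j <- l | P j) s j)%g k = (\sum_(j <- l | P j) ctype (s j) k)%N.
Proof.
move=> k1; elim: l => [|a l IHl]; first by rewrite !big_nil ctype1.
move=> /andP[al ul]; rewrite !big_cons; case: (P a); last exact: IHl.
rewrite ctypeM ?IHl // /disjoint_supp disjoints_subset; apply/subsetP => x xa.
rewrite inE; apply/negP => /psupp_prod[j jl xj].
have aj : a != j by apply: contraNneq al => ->.
by move: (disjointFr (disjoint_s aj) xa); rewrite xj.
Qed.

Lemma ctype_prod k (B : {set I}) : (1 < k)%N ->
  ctype (\prod_(j in B) s j)%g k = (\sum_(j in B) ctype (s j) k)%N.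
Proof. by move=> k1; apply: ctype_prod_seq => //; apply: index_enum_uniq. Qed.

End DisjointFamily.

End CycleType.

Lemma same_ctP (s t : seq nat) :
  reflect (forall k, (1 < k)%N -> nth 0%N s k = nth 0%N t k) (same_ct s t).
Proof.
apply: (iffP forallP) => [st k k1|st k]; last by apply/implyP => k1; rewrite st.
case: (ltnP k (maxn (size s) (size t))) => [kst|].
  by move: (st (Ordinal kst)) => /= /implyP /(_ k1) /eqP.
by rewrite geq_max => /andP[ks kt]; rewrite !nth_default.
Qed.

Lemma nth_ctseq m (u : 'S_m) k : nth 0%N (ctseq u) k = ctype u k.
Proof.
case: (ltnP m k) => mk; first by rewrite nth_default ?ctype_gt // size_map size_iota.
by rewrite (nth_map 0%N) ?size_iota ?ltnS // nth_iota ?ltnS.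
Qed.

Lemma nth_ct_of_mnm K (x : 'X_{1..K}) (i : 'I_K) : nth 0%N (ct_of_mnm x) i.+1 = x i.
Proof. by rewrite /= mnm_tnth (tnth_nth 0%N). Qed.

Lemma nth_ct_of_mnm_ge K (x : 'X_{1..K}) k :
  (K <= k)%N -> nth 0%N (ct_of_mnm x) k.+1 = 0%N.
Proof. by move=> Kk; rewrite /= nth_default // size_tuple. Qed.

Lemma chiR1_neq0 (R : realType) n (i : Iirr [set: 'S_n]%G) : (chiR i 1%g : R) != 0.
Proof.
rewrite /chiR intr_eq0 floor_neq0; apply/orP; right.
have /natrP[d chi1] := Cnat_irr1 i; have := irr1_gt0 i.
by rewrite chi1 ltr0n ler1n.
Qed.

Section Moments.

Variables (R : realType) (n : nat) (rho : Iirr [set: 'S_n]%G -> R).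

Lemma eq_Mct (s t : seq nat) :
  (forall k, (1 < k)%N -> nth 0%N s k = nth 0%N t k) -> Mct rho s = Mct rho t.
Proof.
move=> st; rewrite /Mct (eq_pick (Q := fun u : 'S_n => same_ct t (ctseq u))) // => u /=.
by apply/same_ctP/same_ctP => su k k1; [rewrite -st | rewrite st]; rewrite ?su.
Qed.

Lemma Mct_trivial (ct : seq nat) : prob_on rho ->
  (forall k, (1 < k)%N -> nth 0%N ct k = 0%N) -> Mct rho ct = 1.
Proof.
move=> [_ rho1] ct0; rewrite /Mct; case: pickP => [u /same_ctP ctu|no_u]; last first.
  by move: (no_u 1%g) => /same_ctP[] k k1; rewrite ct0 // nth_ctseq ctype1.
have -> : u = 1%g by apply: ctype_trivial => k k1; rewrite -nth_ctseq -ctu // ct0.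
by rewrite -rho1; apply: eq_bigr => i _; rewrite divff ?mulr1 // chiR1_neq0.
Qed.

Definition dA K (x : 'X_{1..K}) : R :=
  Mct rho (ct_of_mnm x) * \prod_(i < K) Num.sqrt (n%:R : R) ^+ (x i * i).

Lemma mcoeff_Atrunc K D (x : 'X_{1..K}) : (mdeg x <= D)%N ->
  (Atrunc rho K D)@_x =
  Mct rho (ct_of_mnm x) * \prod_(i < K) (Num.sqrt (n%:R : R) ^+ (x i * i) / (x i)`!%:R).
Proof.
move=> xD; rewrite /Atrunc raddf_sum /= (bigD1 (BMultinom (xD : mdeg x < D.+1)%N)) //=.
rewrite mcoeffZ mcoeffX eqxx mulr1 [X in _ + X]big1 ?addr0 // => a.
by rewrite bmeqP /= mcoeffZ mcoeffX => /negbTE ->; rewrite mulr0.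
Qed.

Lemma meval0_mderivm_Atrunc K D (x : 'X_{1..K}) : (mdeg x <= D)%N ->
  meval (fun _ => 0) (Atrunc rho K D)^`M[x] = dA x.
Proof.
move=> xD; rewrite meval0_mderivm mcoeff_Atrunc // mulrCA natr_prod -big_split /=.
congr (_ * _); apply: eq_bigr => i _.
by rewrite mulrCA divff ?mulr1 // pnatr_eq0 -lt0n fact_gt0.
Qed.

Lemma dlogA_mcount (T : finType) K (c : T -> 'I_K) : (0 < #|T|)%N ->
  Mct rho (ct_of_mnm (0%MM : 'X_{1..K})) = 1 ->
  dlogA rho (mcount c setT) =
  \sum_(P | partition P [set: T])
     ((-1) ^+ #|P|.-1 * #|P|.-1`!%:R * \prod_(B in P) dA (mcount c B)).
Proof.
move=> T0 M0; set A := Atrunc rho K #|T|.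
(* As [A - 1] vanishes at [0], the Leibniz rule turns [O] into the ordered
   partition sums of [sum_partitionsE] for [G := dA \o mcount c]. *)
pose O j S := meval (fun _ => 0) ((A - 1) ^+ j)^`M[mcount c S].
have O0 S : O 0%N S = (S == set0)%:R.
  rewrite /O expr0 meval0_mderivm mcoeff1 mcount_eq0.
  have [->|] := eqVneq S set0; last by rewrite mulr0.
  by rewrite mcount0 big1 ?mulr1 // => i _; rewrite mnm0E.
have OS j S : O j.+1 S =
    \sum_(B : {set T} | (B \subset S) && (B != set0)) dA (mcount c B) * O j (S :\: B).
  rewrite /O exprS mderivm_mcountM raddf_sum (bigD1 set0) ?sub0set //=.
  rewrite mevalM mderivmB mevalB meval0_mderivm_Atrunc ?mdeg_mcount ?cards0 //.
  rewrite meval0_mderivm mcoeff1 mcount0 eqxx /dA M0 mul1r mulr1.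
  rewrite [X in X - _]big1 => [|i _]; last by rewrite mnm0E mul0n.
  rewrite [X in _ - X%:R]big1 => [|i _]; last by rewrite mnm0E.
  rewrite subrr mul0r add0r.
  apply: eq_bigr => B /andP[BS B0].
  rewrite mevalM mderivmB mevalB meval0_mderivm_Atrunc ?mdeg_mcount ?max_card //.
  by rewrite (meval0_mderivm (mcount c B) 1) mcoeff1 mcount_eq0 (negbTE B0) mulr0 subr0.
rewrite (sum_partitionsE O0 OS (fun j => (-1) ^+ j.-1 * j.-1`!%:R)).
have T0' : ([set: T] == set0) = false by apply/negbTE; rewrite -card_gt0 cardsT.
rewrite big_ord_recl O0 T0' mulr0 add0r.
rewrite /dlogA mdeg_mcount cardsT /logtrunc -/A !raddf_sum /= big_add1 /= big_mkord.
apply: eq_bigr => j _; rewrite mderivmZ mevalZ /O /bump leq0n add1n add0n.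
by congr (_ * _); rewrite factS natrM (mulrC j.+1%:R) invfM mulrA mulfK.
Qed.

Section CycleFamily.

Variables (r m K : nat) (s : 'I_r -> 'S_m) (c : 'I_r -> 'I_K).
Hypothesis s_cycle : forall j, is_cycle_of_length (s j) (c j).+1.
Hypothesis disjoint_s : forall i j, i != j -> disjoint_supp (s i) (s j).

Lemma ct_of_mcount (B : {set 'I_r}) k : (1 < k)%N ->
  nth 0%N (ct_of_mnm (mcount c B)) k = nth 0%N (ctseq (\prod_(j in B) s j)%g) k.
Proof.
case: k => [//|k] k1; rewrite nth_ctseq (ctype_prod disjoint_s) //.
under eq_bigr => j _ do rewrite s_cycle // eqSS eq_sym.
case: (ltnP k K) => [kK|Kk].
  rewrite (nth_ct_of_mnm _ (Ordinal kK)) mcountE -sum1_card big_mkcond [RHS]big_mkcond /=.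
  by apply: eq_bigr => j _; rewrite !inE -val_eqE /=; case: (j \in B).
rewrite nth_ct_of_mnm_ge // big1 // => j _.
by case: eqP => // kj; move: (ltn_ord (c j)); rewrite kj; lia.
Qed.

Lemma dA_mcount (B : {set 'I_r}) :
  dA (mcount c B) =
  Num.sqrt (n%:R : R) ^+ (\sum_(j in B) perm_length (s j)) *
  Mrho rho (\prod_(j in B) s j)%g.
Proof.
rewrite /dA /Mrho mulrC prodrXr (eq_Mct (@ct_of_mcount B)); congr (_ ^+ _ * _).
under [RHS]eq_bigr => j _ do rewrite (perm_length_cycle (s_cycle j)) //=.
rewrite (partition_big c xpredT) //=; apply: eq_bigr => i _.
rewrite mcountE -sum1_card big_distrl /= mul1n.
by apply: eq_big => j; rewrite inE // => /andP[_ /eqP ->].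
Qed.

Theorem dlogA_kappa : prob_on rho -> (0 < r)%N ->
  dlogA rho (mcount c setT) =
  Num.sqrt (n%:R : R) ^+ (\sum_j perm_length (s j)) * kappa rho s.
Proof.
move=> rho_prob r0; have M0 : Mct rho (ct_of_mnm (0%MM : 'X_{1..K})) = 1.
  apply: Mct_trivial => // -[|k] // k1; case: (ltnP k K) => [kK|Kk].
    by rewrite (nth_ct_of_mnm _ (Ordinal kK)) mnm0E.
  by rewrite nth_ct_of_mnm_ge.
rewrite dlogA_mcount ?card_ord // /kappa mulr_sumr; apply: eq_bigr => P hP.
rewrite mulrCA; congr (_ * _); rewrite (eq_bigr _ (fun B _ => dA_mcount B)) big_split /=.
rewrite prodrXr -(set_partition_big _ hP); congr (_ ^+ _ * _).
by apply: eq_bigl => j; rewrite inE.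
Qed.

End CycleFamily.

Lemma kappa1 m (s : 'I_1 -> 'S_m) :
  kappa rho s = Mrho rho (s ord0).
Proof.
rewrite /kappa (big_pred1 [set setT]) => [|P]; last by rewrite partition_ord1.
rewrite cards1 /= expr0 fact0 !mul1r big_set1 (big_pred1 ord0) // => j.
by rewrite inE (ord1 j).
Qed.

Lemma dlogA_mnm1 k m (u : 'S_m) :
  prob_on rho -> is_cycle_of_length u k.+1 ->
  dlogA rho (mnm1 (@ord_max k)) = Num.sqrt (n%:R : R) ^+ perm_length u * Mrho rho u.
Proof.
move=> rho_prob uk; have c1 : mcount (fun _ : 'I_1 => @ord_max k) setT = mnm1 ord_max.
  apply/mnmP => i; rewrite mcountE mnm1E; case: (ord_max == i).
    by rewrite (eq_card (B := [set: 'I_1])) ?cardsT ?card_ord // => j; rewrite !inE.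
  by apply/eqP; rewrite cards_eq0; apply/eqP/setP => j; rewrite !inE.
rewrite -c1 (dlogA_kappa (s := fun _ => u)) // ?big_ord1 ?kappa1 // => i j.
by rewrite (ord1 i) (ord1 j) eqxx.
Qed.

End Moments.

Lemma is_cycle_of_orbit m (u : 'S_m) (A : {set 'I_m}) x0 :
    x0 \in A -> (forall x, x \notin A -> u x = x) -> A \subset porbit u x0 ->
  is_cycle_of_length u #|A|.
Proof.
move=> x0A u_fix Au; have uA z : z \in A -> u z \in A.
  move=> zA; apply: contraT => uzA; have /perm_inj uz := u_fix _ uzA.
  by move: uzA; rewrite uz zA.
have orbitA : porbit u x0 = A.
  apply/eqP; rewrite eqEsubset Au andbT; apply/subsetP => _ /porbitP[i ->].
  by rewrite permX; elim: i => //= i; apply: uA.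
have orbitsA X : X \in porbits u -> #|X| != 1%N -> X = A.
  move=> XP X1; have [x xu ->] := porbits_nontrivial XP X1.
  have xA : x \in A by apply: contraTT xu => /u_fix ux; rewrite in_psupp ux eqxx.
  by rewrite -orbitA; apply/eqP; rewrite eq_porbit_mem orbitA.
move=> k k1; rewrite /ctype; have [kA|kA] := eqVneq k #|A|.
  rewrite -[nat_of_bool true](cards1 A); apply: eq_card => X; rewrite !inE.
  apply/andP/eqP => [[XP /eqP Xk]|->]; last by rewrite -{1}orbitA imset_f // kA.
  by apply: orbitsA; rewrite // Xk; case: k k1 {kA Xk} => [|[|]].
apply/eqP; rewrite cards_eq0; apply/eqP/setP => X; rewrite !inE.
apply/negbTE/negP => /andP[XP /eqP Xk]; move: kA; rewrite -Xk (orbitsA X XP) ?eqxx //.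
by rewrite Xk; case: k k1 {Xk} => [|[|]].
Qed.

Section BlockRotation.

Variables (m o l : nat).
Hypothesis olm : (o + l <= m)%N.

Definition rot (x : nat) : nat :=
  if (o <= x < o + l)%N then (if x.+1 == o + l then o else x.+1) else x.

Lemma rot_lt x : (x < m)%N -> (rot x < m)%N.
Proof.
by move=> xm; rewrite /rot; case: ifP => [/andP[ox xo]|//]; case: eqP => e; lia.
Qed.

Lemma rot_inj : injective rot.
Proof.
move=> x y; rewrite /rot.
case: (boolP (o <= x < o + l)%N) => [/andP[ox xo]|hx];
case: (boolP (o <= y < o + l)%N) => [/andP[oy yo]|hy]; by repeat case: eqP; lia.
Qed.

Definition rot_ord (x : 'I_m) : 'I_m := Ordinal (rot_lt (ltn_ord x)).

Lemma rot_ord_inj : injective rot_ord.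
Proof. by move=> x y /(congr1 val) /rot_inj /val_inj. Qed.

Definition rot_perm : 'S_m := perm rot_ord_inj.

Lemma rot_permE (x : 'I_m) : val (rot_perm x) = rot x.
Proof. by rewrite permE. Qed.

Lemma rot_perm_fix (x : 'I_m) : ~~ (o <= x < o + l)%N -> rot_perm x = x.
Proof. by move=> xo; apply: val_inj; rewrite rot_permE /rot (negbTE xo). Qed.

Lemma rot_perm_cycle : (0 < l)%N -> is_cycle_of_length rot_perm l.
Proof.
move=> l0; have om : (o < m)%N by lia.
pose x0 := Ordinal om; pose A := [set x : 'I_m | o <= x < o + l]%N.
have iter_rot i : (i < l)%N -> val (iter i rot_perm x0) = (o + i)%N.
  elim: i => [|i IHi] il /=; first by rewrite addn0.
  by rewrite rot_permE IHi 1?ltnW // /rot; case: ifP => [_|/negbT]; [case: eqP|]; lia.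
have cardA : #|A| = l.
  pose f (i : 'I_l) : 'I_m := insubd x0 (o + i).
  have val_f i : val (f i) = (o + i)%N by rewrite insubdK //; have := ltn_ord i; lia.
  have -> : A = f @: setT.
    apply/setP => y; rewrite inE; apply/idP/imsetP => [/andP[oy yo]|[i _ ->]].
      have yol : (y - o < l)%N by lia.
      by exists (Ordinal yol) => //; apply: val_inj; rewrite val_f /=; lia.
    by rewrite val_f; have := ltn_ord i; lia.
  rewrite card_imset ?cardsT ?card_ord // => i j /(congr1 val).
  by rewrite !val_f => /addnI /val_inj.
rewrite -[X in is_cycle_of_length _ X]cardA; apply: (@is_cycle_of_orbit _ _ _ x0).
- by rewrite inE /= leqnn; lia.
- by move=> x; rewrite inE => /rot_perm_fix.
- apply/subsetP => y; rewrite inE => /andP[oy yo]; apply/porbitP; exists (y - o)%N.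
  by apply: val_inj; rewrite /= permX iter_rot /=; lia.
Qed.

Lemma psupp_rot_perm (x : 'I_m) : x \in psupp rot_perm -> (o <= x < o + l)%N.
Proof. by rewrite in_psupp; apply: contraR => /rot_perm_fix ->. Qed.

End BlockRotation.

Lemma exists_disjoint_cycles r (L : 'I_r -> nat) : (forall j, 0 < L j)%N ->
  exists m, exists s : 'I_r -> 'S_m,
    (forall j, is_cycle_of_length (s j) (L j)) /\
    (forall i j, i != j -> disjoint_supp (s i) (s j)).
Proof.
move=> L0; pose m := (\sum_(j < r) L j)%N.
pose o (j : 'I_r) := (\sum_(i < r | (i < j)%N) L i)%N.
have o_lt (i j : 'I_r) : (i < j)%N -> (o i + L i <= o j)%N.
  move=> ij; rewrite /o [X in (_ <= X)%N](bigD1 i) //= addnC leq_add2l.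
  rewrite [X in (_ <= X)%N]big_mkcond [X in (X <= _)%N]big_mkcond /= leq_sum // => k _.
  by case: ifP => [ki|//]; rewrite ifT // (ltn_trans ki ij) neq_ltn ki.
have o_m (j : 'I_r) : (o j + L j <= m)%N.
  rewrite /o /m [X in (_ <= X)%N](bigD1 j) //= addnC leq_add2l.
  rewrite [X in (_ <= X)%N]big_mkcond [X in (X <= _)%N]big_mkcond /= leq_sum // => k _.
  by case: ifP => [ki|//]; rewrite ifT // neq_ltn ki.
exists m, (fun j => rot_perm (o_m j)); split => [j|i j ij].
  exact: rot_perm_cycle.
rewrite /disjoint_supp disjoints_subset; apply/subsetP => x /psupp_rot_perm xi.
rewrite inE; apply/negP => /psupp_rot_perm xj.
by case: (ltngtP i j) ij => [/o_lt|/o_lt|/val_inj ->]; rewrite ?eqxx //; lia.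
Qed.

Local Open Scope classical_set_scope.

Lemma cvg_eq_gt0 (U : topologicalType) (f g : nat -> U) (l : U) :
  (forall n, (0 < n)%N -> f n = g n) -> g @ \oo --> l -> f @ \oo --> l.
Proof.
move=> fg; apply: cvg_trans; apply: near_eq_cvg; exists 1%N => // n /= n0.
by rewrite fg.
Qed.

Theorem mainTheorem10 (R : realType)
  (rho : forall n : nat, Iirr [set: 'S_n]%G -> R)
  (hrho : forall n : nat, (0 < n)%N -> prob_on (rho n)) :
  LLN_appropriate rho <->
  exists c : nat -> R,
    (forall (k : nat), (0 < k)%N ->
       forall (m : nat) (s : 'S_m), is_cycle_of_length s k ->
       (fun n => Num.sqrt (n%:R : R) ^+ perm_length s * Mrho (rho n) s)
         @ \oo --> (c k : R))
    /\
    (forall (r : nat), (2 <= r)%N ->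
       forall (m : nat) (s : 'I_r -> 'S_m),
       (forall j, exists2 k, (0 < k)%N & is_cycle_of_length (s j) k) ->
       (forall i j, i != j -> disjoint_supp (s i) (s j)) ->
       (fun n => Num.sqrt (n%:R : R) ^+ (\sum_j perm_length (s j))
                 * kappa (rho n) s) @ \oo --> (0 : R)).
Proof.
split=> [[[c cvg_c] cvg_mixed]|[c [cvg_cycle cvg_kappa]]].
  exists c; split=> [[//|k] _ m u uk | r r2 m s s_cycle s_disj].
    by apply: (cvg_eq_gt0 _ (cvg_c k)) => n n0; rewrite (dlogA_mnm1 (hrho n n0) uk).
  have /fin_all_exists[col s_col] j : exists i : 'I_m.+1, is_cycle_of_length (s j) i.+1.
    have [k k0 sk] := s_cycle j.
    by exists (Ordinal (cycle_length_pred_leq sk : k.-1 < m.+1)%N); rewrite prednK.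
  apply: (cvg_eq_gt0 (g := fun n => dlogA (rho n) (mcount col setT))) => [n n0|].
    by rewrite (dlogA_kappa s_col s_disj (hrho n n0)) //; lia.
  by apply: cvg_mixed; rewrite mdeg_mcount cardsT card_ord.
split=> [|K a a2].
  exists c => k; have uk := @rot_perm_cycle k.+1 0 k.+1 (leqnn _) (ltn0Sn k).
  apply: (cvg_eq_gt0 _ (cvg_cycle k.+1 (ltn0Sn k) _ _ uk)) => n n0.
  by rewrite (dlogA_mnm1 (hrho n n0) uk).
have [col <-] := exists_mcount a.
have [m [s [s_cycle s_disj]]] := exists_disjoint_cycles (fun j => ltn0Sn (col j)).
have s_cycle' j : exists2 k, (0 < k)%N & is_cycle_of_length (s j) k by exists (col j).+1.
apply: (cvg_eq_gt0 _ (cvg_kappa _ a2 _ _ s_cycle' s_disj)) => n n0.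
by rewrite (dlogA_kappa s_cycle s_disj (hrho n n0)) //; lia.
Qed.
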